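(* Let $(L,\wedge,\vee,0,1)$ be a bounded lattice with additive Nakano mosaic $(L,\boxplus,0)$, where $x\boxplus y:=\{z\in L\mid x\vee y=x\vee z=z\vee y\}$. Then $(x\boxplus x)\boxplus(x\boxplus x)=x\boxplus x$ for all $x\in L$.
   Context: For subsets $X,Y\subseteq L$, $X\boxplus Y:=\bigcup_{u\in X,v\in Y}u\boxplus v$. *)

From mathcomp Require Import all_boot all_order.
From mathcomp Require Import boolp classical_sets.

Set Implicit Arguments.
Unset Strict Implicit.
Unset Printing Implicit Defensive.

Definition nakano {d : Order.disp_t} {L : latticeType d} (x y : L) : set L :=
  [set z | Order.join x y = Order.join x z /\ Order.join x z = Order.join z y].

Definition nakano_set {d : Order.disp_t} {L : latticeType d} (X Y : set L) : set L :=
  [set z | exists u, X u /\ exists v, Y v /\ nakano u v z].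

From mathcomp Require Import all_boot all_order.
From mathcomp Require Import boolp classical_sets.
Import Order.TTheory.
Local Open Scope order_scope.

Section NakanoLattice.
Variables (d : Order.disp_t) (L : latticeType d).
Implicit Types x y z : L.

Lemma nakano_xxE x z : nakano x x z <-> z <= x.
Proof.
rewrite /nakano /= joinxx; split.
- by move=> [/esym/join_idPl].
- by move=> /join_idPl xz; rewrite [z `|` x]joinC xz.
Qed.

Lemma nakano_le_join x y z : nakano x y z -> z <= x `|` y.
Proof. by move=> [-> _]; rewrite leUr. Qed.

Lemma nakano_self z : nakano z z z.
Proof. exact/nakano_xxE. Qed.

End NakanoLattice.

Theorem mainTheorem14 (d : Order.disp_t) (L : tbLatticeType d) (x : L) :
  nakano_set (nakano x x) (nakano x x) = nakano x x.
Proof.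
apply/seteqP; split=> z /=.
- move=> [u [/nakano_xxE ux [v [/nakano_xxE vx /nakano_le_join zuv]]]].
  by apply/nakano_xxE; apply: le_trans zuv _; rewrite leUx ux vx.
- by move=> zx; exists z; split=> //; exists z; split=> //; exact: nakano_self.
Qed.
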